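(* Let $\boldsymbol w=(w_{i,j})_{(i,j)\in\mathcal I}$ be a symmetric polygonal array on a symmetric polygonal domain $\mathcal I$, let $n=\#\{i:(i,i)\in\mathcal I\}$ be its diagonal length, and let $\boldsymbol t=\mathrm{gRSK}(\boldsymbol w)$. Then $$4^{\lfloor n/2\rfloor}\prod_{i=1}^n w_{i,i}=\prod_{j=1}^n t_{j,j}^{(-1)^{n-j}}.$$
   Context: A polygonal domain is a finite $\mathcal I\subset\mathbb N\times\mathbb N$ ($\mathbb N=\{1,2,\dots\}$) such that $(i,j)\in\mathcal I$ whenever $(i+1,j)\in\mathcal I$ or $(i,j+1)\in\mathcal I$; a polygonal array on $\mathcal I$ is $(w_{i,j})_{(i,j)\in\mathcal I}$ with positive real entries. $\mathcal I$ is symmetric if $(i,j)\in\mathcal I\iff(j,i)\in\mathcal I$, and $\boldsymbol w$ is symmetric if moreover $w_{i,j}=w_{j,i}$. An index $(i,j)\in\mathcal I$ is a border index if $(i+1,j+1)\notin\mathcal I$, and an outer index if none of $(i+1,j),(i,j+1),(i+1,j+1)$ is in $\mathcal I$. Local moves: $a_{i,j}$ replaces $w_{i,j}$ by $w_{i,j}(w_{i-1,j}+w_{i,j-1})$; for non-border $(i,j)$, $b_{i,j}$ replaces $w_{i,j}$ by $w_{i,j}^{-1}(w_{i-1,j}+w_{i,j-1})(w_{i+1,j}^{-1}+w_{i,j+1}^{-1})^{-1}$; conventions $w_{i,0}=w_{0,j}=0$ except that $w_{0,1}+w_{1,0}$ is interpreted as $1$. For $i\le j$ set $\varrho_{i,j}=a_{i,j}\circ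 b_{i-1,j-1}\circ\cdots\circ b_{1,j-i+1}$, and for $i\ge j$ set $\varrho_{i,j}=a_{i,j}\circ b_{i-1,j-1}\circ\cdots\circ b_{i-j+1,1}$. The geometric RSK map is defined recursively: $\mathrm{gRSK}(\varnothing)=\varnothing$, and with $\mathcal I_{\mathrm{out}}$ the set of outer indices, $\mathcal I^\circ=\mathcal I\setminus\mathcal I_{\mathrm{out}}$, $\boldsymbol w^\circ=(w_{i,j})_{\mathcal I^\circ}$, $\boldsymbol w^{\mathrm{out}}=(w_{i,j})_{\mathcal I_{\mathrm{out}}}$, $\mathrm{gRSK}(\boldsymbol w)$ is obtained by applying all $\varrho_{i,j}$, $(i,j)\in\mathcal I_{\mathrm{out}}$ (composed in any order; the result does not depend on the order), to the array $\mathrm{gRSK}(\boldsymbol w^\circ)\sqcup\boldsymbol w^{\mathrm{out}}$ on $\mathcal I$. *)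

From HB Require Import structures.
From mathcomp Require Import all_boot all_order all_algebra.
From mathcomp Require Import reals.
Set Implicit Arguments. Unset Strict Implicit. Unset Printing Implicit Defensive.
Import Order.TTheory GRing.Theory Num.Theory.
Local Open Scope ring_scope.

(* An index set is a finite list of pairs (i,j) of positive naturals.
   Arrays are total functions nat -> nat -> R; only values on the domain matter. *)
Definition dom := seq (nat * nat).
Definition arr (R : Type) := nat -> nat -> R.

Definition polygonal_domain (I : dom) : Prop :=
  (forall p, p \in I -> (0 < p.1)%N /\ (0 < p.2)%N) /\
  (forall i j : nat, (0 < i)%N -> (0 < j)%N ->
     ((i.+1, j) \in I \/ (i, j.+1) \in I) -> (i, j) \in I).

Definition symmetric_domain (I : dom) : Prop :=
  forall i j : nat, ((i, j) \in I) = ((j, i) \in I).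

Definition polygonal_array (R : realType) (I : dom) (w : arr R) : Prop :=
  forall i j : nat, (i, j) \in I -> 0 < w i j.

Definition symmetric_array (R : realType) (I : dom) (w : arr R) : Prop :=
  symmetric_domain I /\ forall i j : nat, (i, j) \in I -> w i j = w j i.

Section Moves.
Variable R : realType.

Definition getw (w : arr R) (i j : nat) : R :=
  if (i == 0%N) || (j == 0%N) then 0 else w i j.

(* w_{i-1,j} + w_{i,j-1}, with w_{0,1} + w_{1,0} interpreted as 1 *)
Definition sum_prev (w : arr R) (i j : nat) : R :=
  if (i == 1%N) && (j == 1%N) then 1 else getw w i.-1 j + getw w i j.-1.

Definition upd (w : arr R) (i j : nat) (x : R) : arr R :=
  fun k l => if (k == i) && (l == j) then x else w k l.

Definition move_a (i j : nat) (w : arr R) : arr R :=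
  upd w i j (w i j * sum_prev w i j).

Definition move_b (i j : nat) (w : arr R) : arr R :=
  upd w i j ((w i j)^-1 * sum_prev w i j *
             ((w i.+1 j)^-1 + (w i j.+1)^-1)^-1).

(* rho_{i,j} = a_{i,j} o b_{i-1,j-1} o ... o b_{i-m+1,j-m+1}, m = min i j;
   the rightmost move b_{i-m+1,j-m+1} is applied first. *)
Definition rho (i j : nat) (w : arr R) : arr R :=
  let m := minn i j in
  move_a i j (foldl (fun w' k => move_b (i - m + k) (j - m + k) w') w
                    (iota 1 (m.-1))).

Definition outer_idx (I : dom) : dom :=
  undup [seq p <- I | [&& (p.1.+1, p.2) \notin I, (p.1, p.2.+1) \notin I
                        & (p.1.+1, p.2.+1) \notin I]].

Definition inner_idx (I : dom) : dom :=
  [seq p <- I | p \notin outer_idx I].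

Fixpoint gRSK_fuel (n : nat) (I : dom) (w : arr R) : arr R :=
  match n with
  | 0 => w
  | n'.+1 =>
      let t := gRSK_fuel n' (inner_idx I) w in
      let t' := fun i j => if (i, j) \in outer_idx I then w i j else t i j in
      foldr (fun p acc => rho p.1 p.2 acc) t' (outer_idx I)
  end.

Definition gRSK (I : dom) (w : arr R) : arr R := gRSK_fuel (size I) I w.

End Moves.

Definition diag_length (I : dom) : nat :=
  size (undup [seq p <- I | p.1 == p.2]).

From HB Require Import structures.
From mathcomp Require Import all_boot all_order all_algebra.
From mathcomp Require Import reals.
From mathcomp Require Import zify ring lra.
Import Order.TTheory GRing.Theory Num.Theory.
Local Open Scope ring_scope.
Set Implicit Arguments. Unset Strict Implicit. Unset Printing Implicit Defensive.

(* gRSK adds the outer indices of a domain on top of the gRSK of its interior,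
   each outer index (i,j) contributing rho_{i,j}, which changes only the
   entries on the diagonal line a - b = i - j and reads only that line and the
   two adjacent ones.  Distinct outer indices lie on lines at distance at least
   2, so their maps do not interact; as rho_{j,i} is rho_{i,j} conjugated by
   transposition, every intermediate array stays positive and symmetric.
   Only rho_{n,n} touches the main diagonal.  On a symmetric array s, with
   h_k = s_{k-1,k} + s_{k,k-1} (and h_1 = 1), the moves b_{k,k} replace s_{k,k}
   by h_k h_{k+1} / (4 s_{k,k}) and a_{n,n} replaces s_{n,n} by h_n s_{n,n}, so
   the alternating product of the diagonal telescopes to 4^[n even] s_{n,n}
   times the alternating product of the previous diagonal, of length n - 1. *)

Definition on_line (i j a b : nat) : bool := (a + j == b + i)%N.

Definition near_line (i j a b : nat) : bool :=
  [|| on_line i j a b, on_line i j.+1 a b | on_line i.+1 j a b].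

Definition lines_apart (p q : nat * nat) : bool :=
  (p.1 + q.2 + 1 < p.2 + q.1)%N || (p.2 + q.1 + 1 < p.1 + q.2)%N.

Lemma on_line_tr i j a b : on_line j i b a = on_line i j a b.
Proof. by rewrite /on_line eq_sym. Qed.

Lemma on_near_line i j a b : on_line i j a b -> near_line i j a b.
Proof. by rewrite /near_line => ->. Qed.

Lemma on_line_shift i j i' j' a b :
  (i + j' = j + i')%N -> on_line i j a b = on_line i' j' a b.
Proof. by rewrite /on_line => E; apply/idP/idP; lia. Qed.

Lemma near_line_shift i j i' j' a b :
  (i + j' = j + i')%N -> near_line i j a b = near_line i' j' a b.
Proof. by rewrite /near_line /on_line => E; apply/idP/idP; lia. Qed.

Lemma lines_apartC p q : lines_apart p q = lines_apart q p.
Proof. by rewrite /lines_apart; apply/idP/idP; lia. Qed.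

Lemma lines_apart_near p q a b :
  lines_apart p q -> near_line p.1 p.2 a b -> ~~ on_line q.1 q.2 a b.
Proof. by rewrite /lines_apart /near_line /on_line; lia. Qed.

Lemma foldl_comp_closed (T : Type) (P : (T -> T) -> Prop) (g : nat -> T -> T)
    (s : seq nat) :
  P id -> (forall f h, P f -> P h -> P (f \o h)) -> (forall k, k \in s -> P (g k)) ->
  P (fun x => foldl (fun y k => g k y) x s).
Proof.
move=> P_id P_comp; elim: s => [|k s IHs] Ps /=; first exact: P_id.
apply: (P_comp (fun x => foldl (fun y k' => g k' y) x s) (g k)).
  by apply: IHs => k' k's; apply: Ps; rewrite inE k's orbT.
by apply: Ps; rewrite inE eqxx.
Qed.

Lemma exists_max_seq (T : eqType) (F : T -> nat) (s : seq T) :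
  s != [::] -> exists2 x, x \in s & forall y, y \in s -> (F y <= F x)%N.
Proof.
elim: s => // x s IHs _; have [->|/IHs[z zs Fz]] := eqVneq s [::].
  by exists x => [|y]; rewrite ?mem_seq1 // => /eqP->.
have [le_xz|lt_zx] := leqP (F x) (F z).
  by exists z => [|y]; rewrite inE ?zs ?orbT // => /predU1P[->|/Fz].
exists x => [|y]; first by rewrite inE eqxx.
by rewrite inE => /predU1P[->//|/Fz Fy]; apply: leq_trans Fy (ltnW lt_zx).
Qed.

Lemma mem_outer (J : dom) p : (p \in outer_idx J) =
  (p \in J) && [&& (p.1.+1, p.2) \notin J, (p.1, p.2.+1) \notin J
                 & (p.1.+1, p.2.+1) \notin J].
Proof. by rewrite mem_undup mem_filter andbC. Qed.

Lemma mem_inner (J : dom) p : (p \in inner_idx J) = (p \in J) && (p \notin outer_idx J).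
Proof. by rewrite mem_filter andbC. Qed.

Lemma diag_lengthE (J : dom) N :
  (forall k, ((k, k) \in J) = (0 < k <= N)%N) -> diag_length J = N.
Proof.
move=> diagJ; have diag_inj : injective (fun k : nat => (k, k)) by move=> ? ? [].
rewrite /diag_length -[N in RHS](size_iota 1) -[RHS](size_map (fun k => (k, k))).
apply: perm_size; apply: uniq_perm.
- exact: undup_uniq.
- by rewrite (map_inj_uniq diag_inj) iota_uniq.
case=> a b; rewrite mem_undup mem_filter /=; apply/andP/mapP => [[/eqP<- aJ]|[k]].
  by exists a => //; rewrite mem_iota; move: aJ; rewrite diagJ; lia.
by rewrite mem_iota => k_lt [-> ->]; split; rewrite ?eqxx // diagJ; lia.
Qed.

Section PolygonalDomain.
Variable J : dom.
Hypothesis PJ : polygonal_domain J.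

Lemma polygonal_down_closed a b a' b' :
  (a, b) \in J -> (0 < a' <= a)%N -> (0 < b' <= b)%N -> (a', b') \in J.
Proof.
move=> abJ /andP[a'0 a'a] /andP[b'0 b'b].
have up_row k : ((a' + k)%N, b) \in J -> (a', b) \in J.
  elim: k => [|k IHk]; first by rewrite addn0.
  rewrite addnS => Sk; apply: IHk.
  by have [_ b0] := PJ.1 _ Sk; apply: PJ.2; rewrite ?addn_gt0 ?a'0 //; left.
have up_col k : (a', (b' + k)%N) \in J -> (a', b') \in J.
  elim: k => [|k IHk]; first by rewrite addn0.
  rewrite addnS => Sk; apply: IHk.
  by apply: PJ.2; rewrite ?addn_gt0 ?b'0 //; right.
apply: (up_col (b - b')%N); rewrite subnKC //.
by apply: (up_row (a - a')%N); rewrite subnKC.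
Qed.

Lemma outer_sub : {subset outer_idx J <= J}.
Proof. by move=> p; rewrite mem_outer => /andP[]. Qed.

Lemma outer_max i j a b : (i, j) \in outer_idx J -> (a, b) \in J ->
  (i <= a)%N -> (j <= b)%N -> a = i /\ b = j.
Proof.
rewrite mem_outer => /and4P[ijJ /negP right_out /negP up_out _] abJ ia jb.
have [/= i0 j0] := PJ.1 _ ijJ.
split; apply/eqP; rewrite eqn_leq ?ia ?jb andbT leqNgt; apply/negP => lt.
  by apply: right_out; apply: (polygonal_down_closed abJ) => /=; lia.
by apply: up_out; apply: (polygonal_down_closed abJ) => /=; lia.
Qed.

(* Two outer indices on lines at distance <= 1 would be comparable, or
   adjacent in the same row. *)
Lemma outer_lines_apart p q :
  p \in outer_idx J -> q \in outer_idx J -> p != q -> lines_apart p q.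
Proof.
wlog le_pq : p q / (p.1 <= q.1)%N => [WL pO qO pq|].
  have [le|lt] := leqP p.1 q.1; first exact: WL.
  by rewrite lines_apartC; apply: WL; rewrite 1?eq_sym //; apply: ltnW.
case: p q le_pq => [i j] [i' j'] /= le_ii' pO qO pq.
have [pJ qJ] := (outer_sub pO, outer_sub qO).
have [le_jj'|lt_j'j] := leqP j j'.
  by move: pq; have [-> ->] := outer_max pO qJ le_ii' le_jj'; rewrite eqxx.
rewrite /lines_apart /=; case: ltnP => //; case: ltnP => // h1 h2.
have [ii' jj'] : i' = i /\ j = j'.+1 by lia.
by move: qO; rewrite mem_outer ii' -jj' pJ /= !andbF.
Qed.

Lemma inner_polygonal : polygonal_domain (inner_idx J).
Proof.
split=> [p|i j i0 j0 succ_in]; first by rewrite mem_inner => /andP[/PJ.1].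
have succJ : (i.+1, j) \in J \/ (i, j.+1) \in J.
  by case: succ_in; rewrite mem_inner => /andP[]; [left | right].
have ijJ := PJ.2 i j i0 j0 succJ.
by rewrite mem_inner mem_outer ijJ; case: succJ => ->; rewrite /= ?andbF.
Qed.

Lemma outer_nonempty : J != [::] -> exists p, p \in outer_idx J.
Proof.
move=> /(exists_max_seq (fun p => p.1 + p.2)%N)[p pJ p_max].
exists p; rewrite mem_outer pJ /=.
by apply/and3P; split; apply/negP => qJ; have /= := p_max _ qJ; lia.
Qed.

Lemma size_inner_lt : J != [::] -> (size (inner_idx J) < size J)%N.
Proof.
move=> /outer_nonempty[p pO].
rewrite size_filter -[X in (_ < X)%N](count_predC (fun q => q \notin outer_idx J)).
rewrite -[X in (X < _)%N]addn0 ltn_add2l -has_count.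
by apply/hasP; exists p; rewrite ?outer_sub //= pO.
Qed.

Lemma mem_diag k : ((k, k) \in J) = (0 < k <= diag_length J)%N.
Proof.
suff [N diagJ] : exists N, forall m, ((m, m) \in J) = (0 < m <= N)%N.
  by rewrite (diag_lengthE diagJ).
have [|/hasPn offJ] := boolP (has (fun p : nat * nat => p.1 == p.2) J); last first.
  by exists 0%N => m; apply/idP/idP => [/offJ|]; [rewrite /= eqxx | lia].
rewrite has_filter => /(exists_max_seq fst)[[d d'] /[!mem_filter] /andP[/eqP /= <- dJ]].
move=> d_max.
exists d => m; apply/idP/idP => [mJ|m_le]; last exact: (polygonal_down_closed dJ).
have := PJ.1 _ mJ; have := d_max (m, m); rewrite mem_filter eqxx mJ => /(_ isT) /=; lia.
Qed.

Lemma outer_diag k : (k, k) \in outer_idx J -> k = diag_length J.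
Proof. by rewrite mem_outer /= !mem_diag; lia. Qed.

Lemma diag_length_inner : diag_length (inner_idx J) =
  (diag_length J - ((diag_length J, diag_length J) \in outer_idx J))%N.
Proof.
apply: diag_lengthE => k; rewrite mem_inner mem_diag.
have [->|nk] := eqVneq k (diag_length J); first by case: (_ \in _); rewrite /=; lia.
have -> : (k, k) \notin outer_idx J by apply/negP => /outer_diag; apply/eqP.
by case: (_ \in _); rewrite /=; lia.
Qed.

Section Symmetric.
Hypothesis SJ : symmetric_domain J.

Lemma outer_sym i j : ((i, j) \in outer_idx J) = ((j, i) \in outer_idx J).
Proof.
rewrite !mem_outer /= [(j, i) \in J]SJ [(j.+1, i) \in J]SJ [(j, i.+1) \in J]SJ.
by rewrite [(j.+1, i.+1) \in J]SJ; congr (_ && _); rewrite andbCA.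
Qed.

Lemma inner_symmetric : symmetric_domain (inner_idx J).
Proof. by move=> i j; rewrite !mem_inner SJ outer_sym. Qed.

End Symmetric.

End PolygonalDomain.

Section Moves.
Variable R : realType.
Implicit Types (u v s : arr R).

Lemma rho_closed (P : (arr R -> arr R) -> Prop) i j :
  P id -> (forall f g, P f -> P g -> P (f \o g)) -> P (move_a i j) ->
  (forall k, (0 < k < minn i j)%N ->
     P (move_b (i - minn i j + k) (j - minn i j + k))) ->
  P (rho i j).
Proof.
move=> P_id P_comp Pa Pb; apply: (P_comp (move_a i j)) => //.
by apply: foldl_comp_closed => // k; rewrite mem_iota => k_lt; apply: Pb; lia.
Qed.

Lemma eq_sum_prev u v i j :
  ((0 < i.-1)%N -> (0 < j)%N -> u i.-1 j = v i.-1 j) ->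
  ((0 < i)%N -> (0 < j.-1)%N -> u i j.-1 = v i j.-1) ->
  sum_prev u i j = sum_prev v i j.
Proof.
move=> E_up E_left; rewrite /sum_prev /getw; case: ifP => // _.
by congr (_ + _); case: ifP => // /norP[i0 j0]; rewrite (E_up, E_left) // lt0n.
Qed.

Record line_local (i j : nat) (f : arr R -> arr R) : Prop := LineLocal {
  line_local_off : forall u a b, ~~ on_line i j a b -> f u a b = u a b;
  line_local_on : forall u v, (forall a b, near_line i j a b -> u a b = v a b) ->
    forall a b, on_line i j a b -> f u a b = f v a b }.

Lemma line_local_id i j : line_local i j id.
Proof. by split=> // u v uv a b /on_near_line/uv. Qed.

Lemma line_local_comp i j f g :
  line_local i j f -> line_local i j g -> line_local i j (f \o g).
Proof.
move=> [f_off f_on] [g_off g_on]; split=> [u a b ab|u v uv a b ab] /=.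
  by rewrite f_off // g_off.
apply: f_on => // a' b' near_ab'.
have [on_ab'|off_ab'] := boolP (on_line i j a' b'); first exact: g_on.
by rewrite !g_off // uv.
Qed.

Lemma line_local_shift i j i' j' f :
  (i + j' = j + i')%N -> line_local i' j' f -> line_local i j f.
Proof.
move=> E [f_off f_on]; split=> [u a b|u v uv a b]; rewrite (on_line_shift _ _ E).
  exact: f_off.
by apply: f_on => a' b'; rewrite -(near_line_shift _ _ E); apply: uv.
Qed.

Lemma upd_line_local i j (F : arr R -> R) :
  (forall u v, (forall a b, near_line i j a b -> u a b = v a b) -> F u = F v) ->
  line_local i j (fun u => upd u i j (F u)).
Proof.
move=> F_near; split=> [u a b|u v uv a b ab]; rewrite /upd.
  by case: ifP => // /andP[/eqP-> /eqP->]; rewrite /on_line addnC eqxx.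
by case: ifP => _; [apply: F_near | apply/uv/on_near_line].
Qed.

Lemma sum_prev_near u v i j :
  (forall a b, near_line i j a b -> u a b = v a b) -> sum_prev u i j = sum_prev v i j.
Proof.
by move=> uv; apply: eq_sum_prev => *; apply: uv; rewrite /near_line /on_line; lia.
Qed.

Lemma move_a_line_local i j : line_local i j (move_a i j).
Proof.
apply: upd_line_local => u v uv.
by rewrite (sum_prev_near uv) uv // on_near_line // /on_line addnC.
Qed.

Lemma move_b_line_local i j : line_local i j (move_b i j).
Proof.
apply: upd_line_local => u v uv.
by rewrite (sum_prev_near uv) !uv // /near_line /on_line; lia.
Qed.

Lemma rho_line_local i j : line_local i j (rho i j).
Proof.
apply: rho_closed; [exact: line_local_id | exact: line_local_comp |
                    exact: move_a_line_local | move=> k k_lt].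
apply: (line_local_shift (i' := i - minn i j + k) (j' := j - minn i j + k)).
  by have := geq_minl i j; have := geq_minr i j; lia.
exact: move_b_line_local.
Qed.

Definition rho_seq (L : dom) s : arr R := foldr (fun p acc => rho p.1 p.2 acc) s L.

Lemma rho_seq_off L s a b :
  (forall q, q \in L -> ~~ on_line q.1 q.2 a b) -> rho_seq L s a b = s a b.
Proof.
elim: L => [|q L IHL] //= offL.
rewrite (line_local_off (rho_line_local _ _)) ?offL ?inE ?eqxx //.
by apply: IHL => q' q'L; apply: offL; rewrite inE q'L orbT.
Qed.

Lemma rho_seq_on L s p a b :
  uniq L -> {in L &, forall p q, p != q -> lines_apart p q} ->
  p \in L -> on_line p.1 p.2 a b -> rho_seq L s a b = rho p.1 p.2 s a b.
Proof.
elim: L => [|q L IHL] //= /andP[qL uL] apartL.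
have apart_q q' : q' \in L -> lines_apart q q'.
  move=> q'L; apply: apartL; rewrite ?inE ?eqxx ?q'L ?orbT //.
  by apply: contraNneq qL => ->.
rewrite inE => /predU1P[-> | pL] ab.
  apply: (line_local_on (rho_line_local _ _)) ab.
  move=> a' b' near_ab'; apply: rho_seq_off => q' /apart_q/lines_apart_near; exact.
rewrite (line_local_off (rho_line_local _ _)); last first.
  by apply: lines_apart_near (on_near_line ab); rewrite lines_apartC apart_q.
by apply: IHL => // q1 q2 q1L q2L; apply: apartL; rewrite inE ?q1L ?q2L orbT.
Qed.

Definition tr_arr u : arr R := fun a b => u b a.

Lemma getw_tr u a b : getw (tr_arr u) a b = getw u b a.
Proof. by rewrite /getw orbC. Qed.

Lemma sum_prev_tr u i j : sum_prev (tr_arr u) j i = sum_prev u i j.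
Proof. by rewrite /sum_prev andbC 2!getw_tr addrC. Qed.

Lemma move_a_tr u i j : move_a j i (tr_arr u) = tr_arr (move_a i j u).
Proof.
apply: boolp.funext => a; apply: boolp.funext => b.
by rewrite /move_a /upd /tr_arr sum_prev_tr andbC.
Qed.

Lemma move_b_tr u i j : move_b j i (tr_arr u) = tr_arr (move_b i j u).
Proof.
apply: boolp.funext => a; apply: boolp.funext => b.
rewrite /move_b /upd /tr_arr sum_prev_tr andbC; case: ifP => // _.
by rewrite [(u i j.+1)^-1 + _]addrC.
Qed.

Lemma rho_tr u i j : rho j i (tr_arr u) = tr_arr (rho i j u).
Proof.
rewrite /rho minnC -move_a_tr; congr (move_a _ _ _).
by elim: (iota _ _) u => [|k ks IHks] u //=; rewrite move_b_tr IHks.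
Qed.

End Moves.

Section Stability.
Variable R : realType.
Implicit Types (u v s : arr R) (J : dom).

Definition agree_on J u v := forall a b, (a, b) \in J -> u a b = v a b.

Record dom_stable J (f : arr R -> arr R) : Prop := DomStable {
  dom_stable_agree : forall u v, agree_on J u v -> agree_on J (f u) (f v);
  dom_stable_pos : forall u, polygonal_array J u -> polygonal_array J (f u) }.

Lemma dom_stable_id J : dom_stable J id.
Proof. by split. Qed.

Lemma dom_stable_comp J f g : dom_stable J f -> dom_stable J g -> dom_stable J (f \o g).
Proof.
move=> [f_agree f_pos] [g_agree g_pos]; split=> [u v uv|u u_pos].
  exact/f_agree/g_agree.
exact/f_pos/g_pos.
Qed.

Lemma upd_dom_stable J i j (F : arr R -> R) :
  (forall u v, agree_on J u v -> F u = F v) ->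
  (forall u, polygonal_array J u -> 0 < F u) ->
  dom_stable J (fun u => upd u i j (F u)).
Proof.
move=> F_agree F_pos; split=> [u v uv|u u_pos] a b ab; rewrite /upd.
  by case: ifP => _; [apply: F_agree | apply: uv].
by case: ifP => _; [apply: F_pos | apply: u_pos].
Qed.

Variable J : dom.
Hypothesis PJ : polygonal_domain J.

Lemma sum_prev_agree u v i j :
  (i, j) \in J -> agree_on J u v -> sum_prev u i j = sum_prev v i j.
Proof.
move=> ijJ uv; have [/= i0 j0] := PJ.1 _ ijJ.
by apply: eq_sum_prev => *; apply: uv; apply: (polygonal_down_closed PJ ijJ); lia.
Qed.

Lemma getw_ge0 u a b : polygonal_array J u ->
  ((0 < a)%N -> (0 < b)%N -> (a, b) \in J) -> 0 <= getw u a b.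
Proof.
move=> u_pos abJ; rewrite /getw; case: ifP => // /norP[a0 b0].
by rewrite ltW ?u_pos ?abJ ?lt0n.
Qed.

Lemma sum_prev_gt0 u i j : polygonal_array J u -> (i, j) \in J -> 0 < sum_prev u i j.
Proof.
move=> u_pos ijJ; have [/= i0 j0] := PJ.1 _ ijJ.
have below_in a b : (0 < a <= i)%N -> (0 < b <= j)%N -> (a, b) \in J.
  exact: polygonal_down_closed.
have [up left] : 0 <= getw u i.-1 j /\ 0 <= getw u i j.-1.
  by split; apply: getw_ge0 => // a0 b0; apply: below_in; lia.
rewrite /sum_prev; case: ifP => // /nandP not11.
have : 0 < getw u i.-1 j \/ 0 < getw u i j.-1.
  by case: not11 => /eqP ?; [left | right]; rewrite /getw ifF ?u_pos ?below_in //; lia.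
by case=> ?; lra.
Qed.

Lemma move_a_stable i j : (i, j) \in J -> dom_stable J (move_a i j).
Proof.
move=> ijJ; apply: upd_dom_stable => [u v uv|u u_pos].
  by rewrite (sum_prev_agree ijJ uv) uv.
by rewrite mulr_gt0 ?u_pos ?sum_prev_gt0.
Qed.

Lemma move_b_stable i j :
  (i.+1, j) \in J -> (i, j.+1) \in J -> dom_stable J (move_b i j).
Proof.
move=> rJ uJ; have [/= i0 _] := PJ.1 _ uJ; have [_ /= j0] := PJ.1 _ rJ.
have ijJ : (i, j) \in J by apply: (polygonal_down_closed PJ rJ); lia.
apply: upd_dom_stable => [u v uv|u u_pos].
  by rewrite (sum_prev_agree ijJ uv) !uv.
by rewrite !mulr_gt0 ?invr_gt0 ?addr_gt0 ?invr_gt0 ?u_pos ?sum_prev_gt0.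
Qed.

Lemma rho_stable i j : (i, j) \in J -> dom_stable J (rho i j).
Proof.
move=> ijJ; apply: rho_closed; [exact: dom_stable_id | exact: dom_stable_comp |
                                exact: move_a_stable | move=> k k_lt].
have [/= i0 j0] := PJ.1 _ ijJ; have := geq_minl i j; have := geq_minr i j => mj mi.
by apply: move_b_stable; apply: (polygonal_down_closed PJ ijJ); lia.
Qed.

Lemma rho_seq_stable L : {subset L <= J} -> dom_stable J (rho_seq L).
Proof.
elim: L => [|q L IHL] LJ; first exact: dom_stable_id.
apply: (dom_stable_comp (g := rho_seq L)).
  by apply: rho_stable; rewrite -surjective_pairing LJ ?inE ?eqxx.
by apply: IHL => q' q'L; apply: LJ; rewrite inE q'L orbT.
Qed.

End Stability.

Section Diagonal.
Variable R : realType.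
Implicit Types (s : arr R) (f : nat -> R).

Fixpoint alt_prod (K : nat) f : R := if K is K'.+1 then f K'.+1 / alt_prod K' f else 1.

Lemma eq_alt_prod K f g :
  (forall k, (0 < k <= K)%N -> f k = g k) -> alt_prod K f = alt_prod K g.
Proof.
elim: K => [|K IHK] fg //=.
by congr (_ / _); [apply: fg | apply: IHK => k k_le; apply: fg]; lia.
Qed.

Lemma alt_prod_neq0 K f : (forall k, (0 < k <= K)%N -> f k != 0) -> alt_prod K f != 0.
Proof.
elim: K => [|K IHK] f_neq0 /=; first exact: oner_neq0.
rewrite mulf_neq0 ?invr_eq0 //; first by apply: f_neq0; lia.
by apply: IHK => k k_le; apply: f_neq0; lia.
Qed.

Lemma prod_alt_sign n f : (forall k, (0 < k <= n)%N -> f k != 0) ->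
  \prod_(1 <= j < n.+1) f j ^ (((-1) ^+ (n - j))%R : int) = alt_prod n f.
Proof.
elim: n => [|n IHn] f_neq0; first by rewrite big_geq.
rewrite big_nat_recr //= subnn expr0 expr1z mulrC -IHn => [|k k_le]; last first.
  by apply: f_neq0; lia.
congr (_ * _); rewrite -prodfV; apply: eq_big_nat => j j_lt.
by rewrite subSn ?exprS ?mulN1r ?invr_expz //; lia.
Qed.

Definition diag_sweep s K : arr R := foldl (fun u k => move_b k k u) s (iota 1 K).

Lemma rho_diagE s n : rho n n s = move_a n n (diag_sweep s n.-1).
Proof. by rewrite /rho minnn subnn. Qed.

Lemma diag_sweepS s K : diag_sweep s K.+1 = move_b K.+1 K.+1 (diag_sweep s K).
Proof. by rewrite /diag_sweep -[X in iota _ X]addn1 iotaD foldl_cat. Qed.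

Lemma diag_sweep_offdiag s K a b : a != b -> diag_sweep s K a b = s a b.
Proof.
move=> ab; elim: K => // K IHK; rewrite diag_sweepS /move_b /upd.
by case: ifP => [/andP[/eqP a_eq /eqP b_eq]|_ //]; move: ab; rewrite a_eq b_eq eqxx.
Qed.

Lemma diag_sweep_above s K a : (K < a)%N -> diag_sweep s K a a = s a a.
Proof.
elim: K => // K IHK lt_Ka; have aK : (a == K.+1) = false by apply/negbTE; lia.
by rewrite diag_sweepS /move_b /upd aK IHK // ltnW.
Qed.

Lemma diag_sweep_diag s K k :
  (0 < k <= K)%N -> diag_sweep s K k k = move_b k k s k k.
Proof.
elim: K => [|K IHK] k_le; first lia.
rewrite diag_sweepS {1}/move_b /upd; have [-> /=|kK] := eqVneq k K.+1; last first.
  by rewrite /= IHK //; lia.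
have sum_prev_eq : sum_prev (diag_sweep s K) K.+1 K.+1 = sum_prev s K.+1 K.+1.
  by apply: eq_sum_prev => *; apply: diag_sweep_offdiag; lia.
rewrite /move_b /upd eqxx /= sum_prev_eq diag_sweep_above // !diag_sweep_offdiag //; lia.
Qed.

Lemma rho_diag_below s n k : (0 < k < n)%N -> rho n n s k k = move_b k k s k k.
Proof.
move=> k_lt; have kn : (k == n) = false by apply/negbTE; lia.
by rewrite rho_diagE /move_a /upd kn /= diag_sweep_diag //; lia.
Qed.

Lemma rho_diag_top s n : (0 < n)%N -> rho n n s n n = s n n * sum_prev s n n.
Proof.
move=> n0; rewrite rho_diagE /move_a /upd eqxx /= diag_sweep_above; last lia.
by congr (_ * _); apply: eq_sum_prev => *; apply: diag_sweep_offdiag; lia.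
Qed.

Lemma sum_prev_diag_sym s k :
  (0 < k)%N -> s k.+1 k = s k k.+1 -> sum_prev s k.+1 k.+1 = 2 * s k k.+1.
Proof.
move=> k0 sym; have k_ne0 : (k == 0%N) = false by rewrite eqn0Ngt k0.
by rewrite /sum_prev /getw /= eqSS k_ne0 /= sym; ring.
Qed.

Lemma move_b_diag_sym s k : (0 < k)%N -> 0 < s k k -> 0 < s k k.+1 ->
  s k.+1 k = s k k.+1 ->
  move_b k k s k k = sum_prev s k k * sum_prev s k.+1 k.+1 / (4 * s k k).
Proof.
move=> k0 d_pos e_pos sym; rewrite /move_b /upd eqxx /= sum_prev_diag_sym // sym.
by field; rewrite !lt0r_neq0.
Qed.

Lemma alt_prod_telescope (d h x : nat -> R) K : h 1%N = 1 ->
  (forall k, (0 < k <= K)%N ->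
     [/\ d k != 0, h k != 0 & x k = h k * h k.+1 / (4 * d k)]) ->
  alt_prod K x = h K.+1 / alt_prod K d / 4 ^+ odd K.
Proof.
move=> h1; elim: K => [|K IHK] hyp /=; first by rewrite h1 !divr1.
rewrite IHK => [|k k_le]; last by apply: hyp; lia.
have [dK hK ->] := hyp K.+1 (leqnn _).
have dP : alt_prod K d != 0.
  by apply: alt_prod_neq0 => k k_le; have /hyp[] : (0 < k <= K.+1)%N by lia.
by case: (odd K) => /=; field; rewrite ?dP ?dK ?hK.
Qed.

Lemma alt_prod_rho_diag s n : (0 < n)%N ->
  (forall k, (0 < k <= n)%N -> 0 < s k k) ->
  (forall k, (0 < k < n)%N -> 0 < s k k.+1 /\ s k.+1 k = s k k.+1) ->
  alt_prod n (fun k => rho n n s k k)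
  = 4 ^+ odd n.-1 * s n n * alt_prod n.-1 (fun k => s k k).
Proof.
case: n => // m _ d_pos e_pos.
have h_neq0 k : (0 < k <= m.+1)%N -> sum_prev s k k != 0.
  case: k => [|[|k]] // k_le; first by rewrite /sum_prev oner_neq0.
  have [e_gt0 sym] := e_pos k.+1 (ltac:(lia)).
  by rewrite sum_prev_diag_sym // mulf_neq0 ?lt0r_neq0.
rewrite /= rho_diag_top //.
rewrite (@alt_prod_telescope (fun k => s k k) (fun k => sum_prev s k k)) //.
  have d_neq0 := lt0r_neq0 (d_pos m.+1 (leqnn _)).
  have dm : alt_prod m (fun k => s k k) != 0.
    by apply: alt_prod_neq0 => k k_le; rewrite lt0r_neq0 // d_pos //; lia.
  have hm := h_neq0 m.+1 (leqnn _).
  by case: (odd m) => /=; field; rewrite ?dm ?hm ?d_neq0.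
move=> k k_le; have [e_gt0 sym] := e_pos k (ltac:(lia)).
split; [by rewrite lt0r_neq0 // d_pos; lia | by apply: h_neq0; lia |].
by rewrite rho_diag_below ?move_b_diag_sym // ?d_pos; lia.
Qed.

Lemma four_pow_half_step n f : (0 < n)%N ->
  4 ^+ odd n.-1 * f n * (4 ^+ n.-1./2 * \prod_(1 <= i < n) f i)
  = 4 ^+ n./2 * \prod_(1 <= i < n.+1) f i.
Proof. by case: n => // m _; rewrite [in RHS]big_nat_recr //= uphalf_half exprD; ring. Qed.

End Diagonal.

Section GRSK.
Variable R : realType.
Implicit Types (s w t : arr R) (J : dom).

Definition fill_outer J w t : arr R :=
  fun i j => if (i, j) \in outer_idx J then w i j else t i j.

Lemma gRSK_fuelS n J w : gRSK_fuel n.+1 J w =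
  rho_seq (outer_idx J) (fill_outer J w (gRSK_fuel n (inner_idx J) w)).
Proof. by []. Qed.

Definition diag_identity J w t : Prop :=
  alt_prod (diag_length J) (fun k => t k k)
  = 4 ^+ (diag_length J)./2 * \prod_(1 <= i < (diag_length J).+1) w i i.

Variable J : dom.
Hypotheses (PJ : polygonal_domain J) (SJ : symmetric_domain J).

Lemma rho_seq_outer_on s p a b : p \in outer_idx J -> on_line p.1 p.2 a b ->
  rho_seq (outer_idx J) s a b = rho p.1 p.2 s a b.
Proof. exact: rho_seq_on (undup_uniq _) (outer_lines_apart PJ). Qed.

Lemma rho_seq_outer_sym s : polygonal_array J s -> symmetric_array J s ->
  symmetric_array J (rho_seq (outer_idx J) s).
Proof.
move=> s_pos [_ s_sym]; split=> // a b abJ.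
have [/hasP[[i j] ijO on_ab]|/hasPn off_ab] :=
  boolP (has (fun q => on_line q.1 q.2 a b) (outer_idx J)).
  have jiO : (j, i) \in outer_idx J by rewrite -outer_sym.
  have jiJ := outer_sub jiO.
  have s_tr : agree_on J (tr_arr s) s by move=> x y xyJ; rewrite /tr_arr s_sym // SJ.
  have baJ : (b, a) \in J by rewrite SJ.
  rewrite (rho_seq_outer_on _ ijO on_ab) (rho_seq_outer_on _ jiO) /=; last first.
    by rewrite on_line_tr.
  by rewrite -(dom_stable_agree (rho_stable _ PJ jiJ) s_tr baJ) rho_tr.
have off_ba q : q \in outer_idx J -> ~~ on_line q.1 q.2 b a.
  by case: q => i j ijO; rewrite on_line_tr; apply: (off_ab (j, i)); rewrite -outer_sym.
by rewrite !rho_seq_off //; apply: s_sym.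
Qed.

Lemma fill_outer_pos w t : polygonal_array J w -> polygonal_array (inner_idx J) t ->
  polygonal_array J (fill_outer J w t).
Proof.
move=> w_pos t_pos a b abJ; rewrite /fill_outer.
by case: ifP => abO; [apply: w_pos | apply: t_pos; rewrite mem_inner abJ abO].
Qed.

Lemma fill_outer_sym w t : symmetric_array J w -> symmetric_array (inner_idx J) t ->
  symmetric_array J (fill_outer J w t).
Proof.
move=> [_ w_sym] [_ t_sym]; split=> // a b abJ; rewrite /fill_outer (outer_sym SJ b a).
by case: ifP => abO; [apply: w_sym | apply: t_sym; rewrite mem_inner abJ abO].
Qed.

Lemma diag_identity_outer w t :
  polygonal_array J w -> symmetric_array J w ->
  polygonal_array (inner_idx J) t -> symmetric_array (inner_idx J) t ->
  diag_identity (inner_idx J) w t ->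
  diag_identity J w (rho_seq (outer_idx J) (fill_outer J w t)).
Proof.
move=> w_pos w_sym t_pos t_sym; rewrite /diag_identity (diag_length_inner PJ).
have s_pos := fill_outer_pos w_pos t_pos; have [_ s_sym] := fill_outer_sym w_sym t_sym.
set n := diag_length J; set s := fill_outer J w t in s_pos s_sym *.
have s_off k : (k, k) \notin outer_idx J -> s k k = t k k.
  by move=> kO; rewrite /s /fill_outer (negbTE kO).
have [nO|nO] := boolP ((n, n) \in outer_idx J); last first.
  have diag_off k : (k, k) \notin outer_idx J.
    by apply: contraNN nO => kO; rewrite /n -(outer_diag PJ kO).
  rewrite subn0 => <-; apply: eq_alt_prod => k _.
  rewrite rho_seq_off ?s_off // => -[i j] /= ijO; rewrite /on_line eqn_add2l.
  by apply: contraNN (diag_off i) => /eqP ji; move: ijO; rewrite ji.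
have [/= n0 _] := PJ.1 _ (outer_sub nO).
have diag_in k : (0 < k <= n)%N -> (k, k) \in J by rewrite (mem_diag PJ).
rewrite [(n - true)%N]subn1 => t_diag.
rewrite (eq_alt_prod (g := fun k => rho n n s k k)) => [|k _]; last first.
  by apply: (rho_seq_outer_on _ nO); rewrite /on_line.
rewrite alt_prod_rho_diag // => [|k k_le|k k_lt]; last 2 first.
- exact/s_pos/diag_in.
- have kJ : (k, k.+1) \in J by apply: (polygonal_down_closed PJ (diag_in k.+1 _)); lia.
  by split; [exact: s_pos | rewrite s_sym // SJ].
rewrite {1}/s /fill_outer nO (eq_alt_prod (g := fun k => t k k)) => [|k k_lt].
  by rewrite t_diag prednK // four_pow_half_step.
by rewrite s_off //; apply/negP => /(outer_diag PJ); lia.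
Qed.

Lemma gRSK_step w t :
  polygonal_array J w -> symmetric_array J w ->
  polygonal_array (inner_idx J) t -> symmetric_array (inner_idx J) t ->
  diag_identity (inner_idx J) w t ->
  let F := rho_seq (outer_idx J) (fill_outer J w t) in
  [/\ polygonal_array J F, symmetric_array J F & diag_identity J w F].
Proof.
move=> w_pos w_sym t_pos t_sym t_diag F; split; last exact: diag_identity_outer.
  apply: (dom_stable_pos (rho_seq_stable R PJ (@outer_sub J))).
  exact: fill_outer_pos.
by apply: rho_seq_outer_sym; [apply: fill_outer_pos | apply: fill_outer_sym].
Qed.

End GRSK.

Lemma gRSK_fuel_spec (R : realType) n (J : dom) (w : arr R) : (size J <= n)%N ->
  polygonal_domain J -> polygonal_array J w -> symmetric_array J w ->
  let t := gRSK_fuel n J w in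
  [/\ polygonal_array J t, symmetric_array J t & diag_identity J w t].
Proof.
elim: n J => [|n IHn] J size_le PJ w_pos [SJ w_sym] t.
  move: size_le t; rewrite leqn0 => /nilP -> /=.
  by split=> //; rewrite /diag_identity /= big_geq // expr0 mul1r.
have size_inner : (size (inner_idx J) <= n)%N.
  have [->|J0] := eqVneq J [::]; first by [].
  by have := size_inner_lt J0; lia.
have w_inner_pos : polygonal_array (inner_idx J) w.
  by move=> a b; rewrite mem_inner => /andP[/w_pos].
have w_inner_sym : symmetric_array (inner_idx J) w.
  by split=> [|a b]; [exact: inner_symmetric | rewrite mem_inner => /andP[/w_sym]].
have [] := IHn _ size_inner (inner_polygonal PJ) w_inner_pos w_inner_sym.
by rewrite /t gRSK_fuelS; apply: gRSK_step.
Qed.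

Theorem proposition2p5 (R : realType) (I : dom) (w : arr R) :
  polygonal_domain I -> polygonal_array I w -> symmetric_array I w ->
  let n := diag_length I in
  let t := gRSK I w in
  4 ^+ (n./2) * \prod_(1 <= i < n.+1) w i i
  = \prod_(1 <= j < n.+1) t j j ^ (((-1) ^+ (n - j))%R : int).
Proof.
move=> PI w_pos w_sym n t.
have [t_pos _ t_diag] := gRSK_fuel_spec (leqnn (size I)) PI w_pos w_sym.
rewrite prod_alt_sign => [|k k_le]; first by rewrite t_diag.
by rewrite lt0r_neq0 // t_pos // (mem_diag PI).
Qed.
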